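(* The weighted chromatic polynomial, viewed as an invariant of simple graphs (every vertex assigned weight $1$), is a $4$-invariant: for every simple graph $G$ and every pair of distinct vertices $a,b$ of $G$, $$W_G-W_{G'_{ab}}=W_{\widetilde G_{ab}}-W_{\widetilde G'_{ab}}.$$
   Context: A weighted graph is a simple graph with a positive integer weight assigned to each vertex. The weighted chromatic polynomial $W_G\in\mathbb{C}[q_1,q_2,\dots]$ is the unique weighted graph invariant such that: (i) the graph with one vertex of weight $n$ has $W=q_n$; (ii) $W_{G_1\sqcup G_2}=W_{G_1}W_{G_2}$ for disjoint unions; (iii) $W_G=W_{G'_e}+W_{G''_e}$ for every edge $e$, where $G'_e$ is $G$ with $e$ deleted and $G''_e$ is $G$ with $e$ contracted (the two ends of $e$ merge into one vertex whose weight is the sum of their weights, and multiple edges arising are replaced by single edges). A simple graph is regarded as a weighted graph with all weights equal to $1$. For a simple graph $G$ and vertices $a,b$: $G'_{ab}$ is obtained from $G$ by switching adjacency between $a$ and $b$ (adding the edge $ab$ if absent, removing it if present); $\widetilde G_{ab}$ is obtained from $G$ by switching the adjacency between $a$ and each vertex $v\ne a$ of $G$ adjacent to $b$; $\widetilde G'_{ab}$ is obtained by composing these two operations. *)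

From HB Require Import structures.
From mathcomp Require Import all_boot all_order all_algebra.
Set Implicit Arguments. Unset Strict Implicit. Unset Printing Implicit Defensive.
Import GRing.Theory.
Local Open Scope ring_scope.

Record wgraph := WGraph { vt : finType; adj : rel vt; wt : vt -> nat }.
Arguments adj : clear implicits.
Arguments wt : clear implicits.

Definition simple_rel (T : finType) (e : rel T) : Prop :=
  irreflexive e /\ symmetric e.

Definition valid_wgraph (G : wgraph) : Prop :=
  simple_rel (adj G) /\ (forall v, 0 < wt G v)%N.

Definition wg_iso (G H : wgraph) : Prop :=
  exists f : vt G -> vt H, [/\ bijective f,
    forall u v, adj H (f u) (f v) = adj G u v &
    forall u, wt H (f u) = wt G u].

Definition one_vertex (n : nat) : wgraph :=
  @WGraph unit (fun _ _ => false) (fun _ => n).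

Definition wg_union (G1 G2 : wgraph) : wgraph :=
  @WGraph (vt G1 + vt G2)%type
    (fun u v => match u, v with
                | inl x, inl y => adj G1 x y
                | inr x, inr y => adj G2 x y
                | _, _ => false end)
    (fun u => match u with inl x => wt G1 x | inr x => wt G2 x end).

Definition wg_delete (G : wgraph) (x y : vt G) : wgraph :=
  @WGraph (vt G)
    (fun u v => adj G u v && ~~ (((u == x) && (v == y)) || ((u == y) && (v == x))))
    (wt G).

(* contraction of the edge xy: y is merged into x; the new vertex (still
   called x) has weight wt x + wt y and is adjacent to the union of the
   neighbourhoods of x and y (multiple edges become single edges, the loop
   coming from xy is discarded). *)
Definition wg_contract (G : wgraph) (x y : vt G) : wgraph :=
  @WGraph {v : vt G | v != y}
    (fun u v => (val u != val v) &&
       [|| adj G (val u) (val v),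
           (val u == x) && adj G y (val v) |
           (val v == x) && adj G (val u) y])
    (fun u => if val u == x then (wt G x + wt G y)%N else wt G (val u)).

(* W is the weighted chromatic polynomial with values in R, the variable q_n
   being interpreted as q n. *)
Definition is_weighted_chromatic (R : comNzRingType) (q : nat -> R)
    (W : wgraph -> R) : Prop :=
  [/\
      forall G H, valid_wgraph G -> valid_wgraph H -> wg_iso G H -> W G = W H,
      forall n, (0 < n)%N -> W (one_vertex n) = q n,
      forall G1 G2, valid_wgraph G1 -> valid_wgraph G2 ->
        W (wg_union G1 G2) = W G1 * W G2 &
      forall G (x y : vt G), valid_wgraph G -> adj G x y ->
        W G = W (wg_delete x y) + W (wg_contract x y)].

Definition sgraph (T : finType) (e : rel T) : wgraph := @WGraph T e (fun _ => 1%N).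

Definition switch_ab (T : finType) (e : rel T) (a b : T) : rel T :=
  fun u v => if ((u == a) && (v == b)) || ((u == b) && (v == a))
             then ~~ e u v else e u v.

Definition tilde_ab (T : finType) (e : rel T) (a b : T) : rel T :=
  fun u v => if ((u == a) && (v != a) && e b v) || ((v == a) && (u != a) && e b u)
             then ~~ e u v else e u v.

(* ~G'_{ab}: composition of the two operations (they commute) *)
Definition tilde_switch_ab (T : finType) (e : rel T) (a b : T) : rel T :=
  tilde_ab (switch_ab e a b) a b.

(* If ab is an edge, deletion-contraction along ab applied to G and to ~G_ab
   gives W_G - W_{G'_ab} = W_{G/ab} and W_{~G_ab} - W_{~G'_ab} = W_{~G_ab/ab}.
   The two contractions coincide: after merging b into a, the neighbourhood of
   the new vertex is N(a) ∪ N(b), and switching a against N(b) does not change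
   this union.  If ab is not an edge, apply the edge case to G'_ab. *)
From HB Require Import structures.
From mathcomp Require Import all_boot all_order all_algebra.
From Stdlib Require Import FunctionalExtensionality.
Import GRing.Theory.
Local Open Scope ring_scope.

Section Switching.
Context {T : finType} {a b : T}.
Hypothesis neq_ab : a != b.

Lemma switch_abK (e : rel T) : switch_ab (switch_ab e a b) a b = e.
Proof.
apply: functional_extensionality => u; apply: functional_extensionality => v.
by rewrite /switch_ab; case: ifP => c; rewrite c ?negbK.
Qed.

Lemma switch_ab_ab (e : rel T) : switch_ab e a b a b = ~~ e a b.
Proof. by rewrite /switch_ab !eqxx. Qed.

Lemma switch_ab_simple (e : rel T) : simple_rel e -> simple_rel (switch_ab e a b).
Proof.
case=> irr sym; split.
- move=> u; rewrite /switch_ab irr.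
  case: (u =P a) => [->|] /=; first by rewrite (negbTE neq_ab).
  by case: (u =P b).
- move=> u v; rewrite /switch_ab sym [X in if X then _ else _]orbC.
  by rewrite [(v == a) && _]andbC [(v == b) && _]andbC.
Qed.

Lemma tilde_ab_simple (e : rel T) : simple_rel e -> simple_rel (tilde_ab e a b).
Proof.
case=> irr sym; split.
- by move=> u; rewrite /tilde_ab irr; case: (u =P a).
- by move=> u v; rewrite /tilde_ab [X in if X then _ else _]orbC (sym u v).
Qed.

Lemma tilde_ab_ab (e : rel T) : irreflexive e -> tilde_ab e a b a b = e a b.
Proof. by move=> irr; rewrite /tilde_ab eqxx irr /= !andbF. Qed.

Lemma tilde_switch_abE (e : rel T) : simple_rel e ->
  tilde_switch_ab e a b = switch_ab (tilde_ab e a b) a b.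
Proof.
case=> irr sym.
apply: functional_extensionality => u; apply: functional_extensionality => v.
have neq_ba : (b == a) = false by rewrite eq_sym (negbTE neq_ab).
rewrite /tilde_switch_ab /tilde_ab /switch_ab !eqxx neq_ba /= ?andbF ?andbT ?orbF.
case: (u =P a) => [->|?]; case: (v =P a) => [->|?];
  rewrite ?eqxx /= ?neq_ba ?irr //=.
all: try case: (v =P b) => [->|?]; try case: (u =P b) => [->|?];
  by rewrite ?eqxx ?neq_ba ?irr /= ?andbF ?orbF.
Qed.

Lemma wg_delete_sgraph (e : rel T) : symmetric e -> e a b ->
  @wg_delete (sgraph e) a b = sgraph (switch_ab e a b).
Proof.
move=> sym eab; rewrite /wg_delete /sgraph /=; congr WGraph.
apply: functional_extensionality => u; apply: functional_extensionality => v.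
rewrite /switch_ab; case: ifP => /=; last by rewrite andbT.
by case/orP=> /andP[/eqP-> /eqP->]; rewrite ?eab // sym eab.
Qed.

Lemma wg_contract_tilde_ab (e : rel T) : simple_rel e ->
  @wg_contract (sgraph (tilde_ab e a b)) a b = @wg_contract (sgraph e) a b.
Proof.
case=> irr sym; rewrite /wg_contract /=; congr WGraph.
apply: functional_extensionality => -[u ?]; apply: functional_extensionality => -[v ?] /=.
have neq_ba : (b == a) = false by rewrite eq_sym (negbTE neq_ab).
rewrite /tilde_ab irr neq_ba /= !andbF /= (sym u b).
case: (u =P a) => [->|?]; case: (v =P a) => [->|?] //=; rewrite ?eqxx /=.
- by case: (e b v); case: (e a v).
- by case: (e b u); case: (e u a).
Qed.

End Switching.

Section FourTermRelation.
Context {R : comNzRingType} {q : nat -> R} {W : wgraph -> R}.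
Hypothesis HW : is_weighted_chromatic q W.
Context {T : finType} {a b : T}.
Hypothesis neq_ab : a != b.

Lemma weighted_chromatic_switch_edge (e : rel T) : simple_rel e -> e a b ->
  W (sgraph e) - W (sgraph (switch_ab e a b)) = W (@wg_contract (sgraph e) a b).
Proof.
move=> simple_e eab; case: HW => _ _ _ deletion_contraction.
have valid_e : valid_wgraph (sgraph e) by [].
rewrite (deletion_contraction (sgraph e) a b valid_e eab) wg_delete_sgraph //.
- by rewrite addrAC subrr add0r.
- by case: simple_e.
Qed.

Lemma four_term_relation_edge (e : rel T) : simple_rel e -> e a b ->
  W (sgraph e) - W (sgraph (switch_ab e a b)) =
  W (sgraph (tilde_ab e a b)) - W (sgraph (tilde_switch_ab e a b)).
Proof.
move=> simple_e eab; have [irr _] := simple_e.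
have simple_tilde : simple_rel (tilde_ab e a b) by exact: tilde_ab_simple.
rewrite tilde_switch_abE // !weighted_chromatic_switch_edge ?tilde_ab_ab //.
by rewrite wg_contract_tilde_ab.
Qed.

End FourTermRelation.

Theorem mainTheorem1 (R : comNzRingType) (q : nat -> R) (W : wgraph -> R)
    (HW : is_weighted_chromatic q W)
    (T : finType) (G : rel T) (HG : simple_rel G) (a b : T) (hab : a != b) :
  W (sgraph G) - W (sgraph (switch_ab G a b)) =
  W (sgraph (tilde_ab G a b)) - W (sgraph (tilde_switch_ab G a b)).
Proof.
have [Gab | nGab] := boolP (G a b).
  exact: (four_term_relation_edge HW hab G HG Gab).
have := four_term_relation_edge HW hab _ (switch_ab_simple hab _ HG).
rewrite switch_ab_ab nGab /tilde_switch_ab !switch_abK => /(_ isT) relation.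
by apply: oppr_inj; rewrite !opprB relation.
Qed.
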